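(* Let $\mathcal G$ be a strongly connected directed graph with no self loops, vertex set $\mathcal V=\{1,\dots,n\}$ and edge set $\mathcal E=\{1,\dots,m\}$. Let $B=S-D$ be its incidence matrix, let $Q=DB^\mathsf{T}$, and let $W$ and $Q^\ddagger$ be as in the context. Let $\omega^{\mathrm u}\in\mathbb{R}^n$ be constant. Consider the dynamics \[ \dot{\tilde\theta}(t)=\omega^{\mathrm u}+c(t),\qquad \tilde\beta(t)=B^\mathsf{T}\tilde\theta(t),\qquad y(t)=D\tilde\beta(t). \] Let $\mathcal T$ be an outward directed spanning tree with root $r$, and let $g_1,\dots,g_{n-1}$ be an ordering of its edges such that $g_a\prec g_b$ implies $a<b$. Let $k,k_2>0$. Let $0<t_1<\dots<t_n$ satisfy $t_{j+1}-t_j>|\tilde\beta_{g_j}(t_j)|/k_2$ for each $j$. For each $i\neq r$, let $j(i)$ be the unique index with $\mathrm{dst}(g_{j(i)})=i$. Let the control be \[ c_i(t)=\begin{cases} k\,y_i(t) & t<t_1,\\ k\,y_i(t_1)+k_2\,\mathrm{sign}\big(\tilde\beta_{g_{j(i)}}(t)\big) & i\neq r,\ t_{j(i)}\le t<t_{j(i)+1},\\ k\,y_i(t_1) & \text{otherwise.}\end{cases} \] Assume \[ \tilde\beta(t_1)=-k^{-1}B^\mathsf{T}Q^\ddagger\omega^{\mathrm u} \qquad\text{and}\qquad \omega^{\mathrm u}+k\,y(t_1)=W\omega^{\mathrm u}. \] Then $\tilde\beta_a(t_n)=0$ for every edge $a\in\mathcal T$.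
   Context: The matrices $S,D\in\mathbb{R}^{n\times m}$ are defined by $S_{ie}=1$ if node $i$ is the source of edge $e$ and $0$ otherwise, and $D_{ie}=1$ if node $i$ is the destination of edge $e$ and $0$ otherwise. The vector $\mathbf{1}$ is the all-ones vector. The matrix $Q=DB^\mathsf{T}$ is an irreducible rate matrix. Let $z>0$ satisfy $z^\mathsf{T}Q=0$ and $\mathbf{1}^\mathsf{T}z=1$, and set $W=\mathbf{1}z^\mathsf{T}$. Write $Q=T\begin{bmatrix}0&0\\0&\Lambda\end{bmatrix}T^{-1}$, where $T$ is invertible with first column $\mathbf{1}$, the first row of $T^{-1}$ is $z^\mathsf{T}$, and $\Lambda$ is invertible. Define $Q^\ddagger=T\begin{bmatrix}0&0\\0&\Lambda^{-1}\end{bmatrix}T^{-1}$. An outward directed spanning tree with root $r$ is a set $\mathcal T$ of $n-1$ edges such that every vertex is reachable from $r$ by a directed path in $\mathcal T$, and each vertex other than $r$ is the destination of exactly one edge of $\mathcal T$. For $f,g\in\mathcal T$, $f\prec g$ means there is a directed walk of nonzero length in $\mathcal T$ from $\mathrm{dst}(f)$ to $\mathrm{dst}(g)$. The convention $\mathrm{sign}(0)=0$ is used. *)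

From HB Require Import structures.
From mathcomp Require Import all_boot all_order all_algebra.
From mathcomp Require Import all_classical all_reals all_analysis.
Set Implicit Arguments. Unset Strict Implicit. Unset Printing Implicit Defensive.
Import Order.TTheory GRing.Theory Num.Theory.
Local Open Scope ring_scope.

Section Graph.
Variables (R : realType) (N m : nat).
Variables (src dst : 'I_m -> 'I_N).

Definition Smx : 'M[R]_(N, m) := \matrix_(i, e) (src e == i)%:R.
Definition Dmx : 'M[R]_(N, m) := \matrix_(i, e) (dst e == i)%:R.
Definition Bmx : 'M[R]_(N, m) := Smx - Dmx.
Definition Qmx : 'M[R]_N := Dmx *m Bmx^T.

Definition adj : rel 'I_N := fun u v => [exists e, (src e == u) && (dst e == v)].
Definition strongly_connected : Prop := forall u v : 'I_N, connect adj u v.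
Definition no_self_loops : Prop := forall e : 'I_m, src e != dst e.

Definition tadj (T : {set 'I_m}) : rel 'I_N :=
  fun u v => [exists e in T, (src e == u) && (dst e == v)].

Definition out_spanning_tree (T : {set 'I_m}) (r : 'I_N) : Prop :=
  [/\ #|T| = N.-1,
      (forall v : 'I_N, connect (tadj T) r v) &
      (forall v : 'I_N, v != r -> #|[set e in T | dst e == v]| = 1%N)].

(* f ≺ g : directed walk of nonzero length in T from dst f to dst g *)
Definition tprec (T : {set 'I_m}) (f g : 'I_m) : bool :=
  [exists v, tadj T (dst f) v && connect (tadj T) v (dst g)].
End Graph.

Definition is_Qdagger (R : realType) (p : nat) (Q Qd : 'M[R]_(1 + p))
    (z : 'cV[R]_(1 + p)) : Prop :=
  exists (T : 'M[R]_(1 + p)) (L : 'M[R]_p),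
    [/\ T \in unitmx, lsubmx T = const_mx 1, usubmx (invmx T) = z^T
      & L \in unitmx] /\
    Q = T *m block_mx 0 0 0 L *m invmx T /\
    Qd = T *m block_mx 0 0 0 (invmx L) *m invmx T.

(* The control law c(t) (0-indexed: times tau 0 < ... < tau p, tree edges
   g 0, ..., g (p-1); edge g j is active on [tau j, tau (j+1))). *)
Definition ctrl (R : realType) (p m : nat) (dst : 'I_m -> 'I_(1 + p))
    (g : 'I_p -> 'I_m) (r : 'I_(1 + p)) (k k2 : R) (tau : nat -> R)
    (y : R -> 'cV[R]_(1 + p)) (bta : R -> 'cV[R]_m)
    (i : 'I_(1 + p)) (t : R) : R :=
  if t < tau 0%N then k * y t i 0
  else match [pick j : 'I_p | dst (g j) == i] with
       | Some j => if (i != r) && (tau j <= t) && (t < tau j.+1)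
                   then k * y (tau 0%N) i 0 + k2 * Num.sg (bta t (g j) 0)
                   else k * y (tau 0%N) i 0
       | None => k * y (tau 0%N) i 0
       end.

Definition beta_of (R : realType) (N m : nat) (src dst : 'I_m -> 'I_N)
    (theta : R -> 'cV[R]_N) (t : R) : 'cV[R]_m := (Bmx R src dst)^T *m theta t.
Definition y_of (R : realType) (N m : nat) (src dst : 'I_m -> 'I_N)
    (theta : R -> 'cV[R]_N) (t : R) : 'cV[R]_N :=
  Dmx R dst *m beta_of src dst theta t.

From HB Require Import structures.
From mathcomp Require Import all_boot all_order all_algebra.
From mathcomp Require Import all_classical all_reals all_analysis.
From mathcomp Require Import ring lra.
Set Implicit Arguments. Unset Strict Implicit. Unset Printing Implicit Defensive.
Import Order.TTheory GRing.Theory Num.Theory numFieldNormedType.Exports.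
Local Open Scope classical_set_scope.
Local Open Scope ring_scope.

(* On [[tau j, tau (j+1))] the closed loop reads
   [theta' = omega + k y(tau 0) + k2 sg(beta_(g j)) e_(dst (g j))], and the offset
   [omega + k y(tau 0) = W omega = 1 z^T omega] is the same at every node.  Hence
   [beta_(g j)' = - k2 sg beta_(g j)], which drives [beta_(g j)] to zero before [tau (j+1)]
   since [|beta_(g j)(tau j)| < k2 (tau (j+1) - tau j)].  For [l > j] the edge [g l] neither
   ends at [dst (g j)] (tree edges have distinct destinations) nor at [src (g j)] (that would
   put [g l] before [g j]), so [beta_(g j)] stays constant, hence zero, afterwards. *)

Section PiecewiseDerivative.
Variable R : realType.
Implicit Types (f d : R -> R) (S : seq R) (a b : R).

Lemma piecewise_derive_le0_le f d S a b : a <= b ->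
  {within [set x | a <= x <= b], continuous f} ->
  (forall t, a < t < b -> t \notin S -> is_derive t 1 f (d t) /\ d t <= 0) ->
  f b <= f a.
Proof.
elim: S a b => [|s S IH] a b ab f_cont f_deriv.
  have [->|a_neq_b] := eqVneq a b; first exact: lexx.
  have {}ab : a < b by rewrite lt_neqAle a_neq_b ab.
  have f_deriv' x : x \in `]a, b[ -> is_derive x 1 f (d x).
    by rewrite in_itv /= => xab; case: (f_deriv x xab).
  have f_cont' : {within `[a, b], continuous f}.
    by apply: continuous_subspaceW f_cont => x /=; rewrite in_itv.
  rewrite -subr_le0; have [c] := MVT ab f_deriv' f_cont'.
  rewrite in_itv /= => cab ->; have [_ dc_le0] := f_deriv c cab isT.
  by rewrite mulr_le0_ge0 // subr_ge0 ltW.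
have notin_cons t : t \notin S -> t != s -> t \notin s :: S.
  by move=> tS ts; rewrite in_cons negb_or ts tS.
have [/andP[a_s s_b]|s_out] := boolP (a < s < b); last first.
  apply: IH => // t tab tS; apply: f_deriv => //.
  by apply: notin_cons => //; apply: contraNneq s_out => <-.
apply: (@le_trans _ _ (f s)); apply: IH; rewrite ?ltW //.
- apply: continuous_subspaceW f_cont => x /= /andP[sx ->].
  by rewrite (le_trans (ltW a_s) sx).
- move=> t /andP[st tb] tS; apply: f_deriv; first by rewrite tb (lt_trans a_s st).
  by rewrite notin_cons // gt_eqF.
- apply: continuous_subspaceW f_cont => x /= /andP[-> xs].
  by rewrite (le_trans xs (ltW s_b)).
- move=> t /andP[a_t ts] tS; apply: f_deriv; first by rewrite a_t (lt_trans ts s_b).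
  by rewrite notin_cons // lt_eqF.
Qed.

Lemma piecewise_derive0_eq f S a b : a <= b ->
  {within [set x | a <= x <= b], continuous f} ->
  (forall t, a < t < b -> t \notin S -> is_derive t 1 f 0) ->
  f b = f a.
Proof.
move=> ab f_cont f_deriv; apply/eqP; rewrite eq_le.
rewrite (@piecewise_derive_le0_le _ (fun=> 0) S _ _ ab f_cont) /=; last first.
  by move=> t tab tS /=; split; [exact: f_deriv | exact: lexx].
rewrite -lerN2; apply: (@piecewise_derive_le0_le (- f) (fun=> 0) S _ _ ab).
  by move=> x; apply: continuousN; exact: f_cont.
move=> t tab tS; split => //.
by rewrite -oppr0; apply: is_deriveN; exact: f_deriv.
Qed.

End PiecewiseDerivative.

Section SignFeedback.
Variables (R : realType) (f : R -> R) (S : seq R) (k a b : R).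
Hypotheses (k_gt0 : 0 < k) (ab : a < b).
Hypothesis f_cont : {within [set x | a <= x <= b], continuous f}.
Hypothesis f_deriv : forall t, a < t < b -> t \notin S ->
  is_derive t 1 f (- (k * Num.sg (f t))).

Lemma sg_feedback_sqr_le t : a <= t <= b -> f b ^+ 2 <= f t ^+ 2.
Proof.
move=> /andP[a_t t_b]; rewrite !expr2.
have sub : [set x | t <= x <= b] `<=` [set x | a <= x <= b].
  by move=> x /= /andP[tx ->]; rewrite (le_trans a_t tx).
apply: (@piecewise_derive_le0_le R (f * f) (fun x => - (2 * k * `|f x|)) S t b t_b).
  move=> x; apply: continuousM; exact: continuous_subspaceW sub f_cont x.
move=> s /andP[ts sb] sS; split; last by rewrite oppr_le0 !mulr_ge0 // ltW.
have s_ab : a < s < b by rewrite (le_lt_trans a_t ts) sb.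
have fs := f_deriv s_ab sS; apply: is_derive_eq (is_deriveM fs fs) _.
by rewrite /GRing.scale /= [`|f s|]normrEsg; ring.
Qed.

Lemma sg_feedback_le0 : `|f a| < k * (b - a) -> f b <= 0.
Proof.
move=> fa_lt; rewrite leNgt; apply/negP => fb_gt0.
(* Then [f] stays positive on [[a, b]] (its square is nonincreasing), so [f + k id] is
   nonincreasing there, contradicting [|f a| < k (b - a)]. *)
have f_gt0 t : a <= t <= b -> 0 < f t.
  move=> /andP[a_t t_b]; rewrite ltNge; apply/negP => ft_le0.
  have [c] : exists2 c, c \in `[t, b] & f c = 0.
    apply: IVT => //; last by rewrite ge_min ft_le0 le_max (ltW fb_gt0) orbT.
    apply: continuous_subspaceW f_cont => x /=; rewrite in_itv /= => /andP[tx ->].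
    by rewrite (le_trans a_t tx).
  rewrite in_itv /= => /andP[tc cb] fc0.
  have := @sg_feedback_sqr_le c; rewrite (le_trans a_t tc) cb fc0 expr0n /=.
  by move=> /(_ isT); apply/negP; rewrite -ltNge exprn_gt0.
have lin_cont : {within [set x | a <= x <= b], continuous (f + k *: id)}.
  move=> x; apply: continuousD; first exact: f_cont.
  by apply: continuous_subspaceT; exact: scaler_continuous.
suff : f b + k * b <= f a + k * a by have := ler_norm (f a); lra.
apply: (@piecewise_derive_le0_le R (f + k *: id) (fun=> 0) S a b (ltW ab) lin_cont).
move=> t tab tS; split => //.
apply: is_derive_eq (is_deriveD (f_deriv tab tS) (is_deriveZ k (is_derive_id t 1))) _.
have /andP[a_t t_b] := tab.
by rewrite gtr0_sg ?f_gt0 ?ltW // /GRing.scale /= !mulr1 addNr.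
Qed.

End SignFeedback.

Lemma sg_feedback_eq0 (R : realType) (f : R -> R) (S : seq R) (k a b : R) :
  0 < k -> a < b -> {within [set x | a <= x <= b], continuous f} ->
  (forall t, a < t < b -> t \notin S -> is_derive t 1 f (- (k * Num.sg (f t)))) ->
  `|f a| < k * (b - a) -> f b = 0.
Proof.
move=> k_gt0 ab f_cont f_deriv fa_lt; apply/eqP; rewrite eq_le.
rewrite (@sg_feedback_le0 R f S k a b k_gt0 ab f_cont f_deriv fa_lt) /= -oppr_le0.
apply: (@sg_feedback_le0 R (- f) S k a b k_gt0 ab); rewrite ?normrN //.
- by move=> x; apply: continuousN; exact: f_cont.
- by move=> t tab tS; rewrite /= sgrN mulrN; exact: is_deriveN (f_deriv t tab tS).
Qed.

Section OrderedTree.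
Variables (p m : nat) (src dst : 'I_m -> 'I_(1 + p)) (T : {set 'I_m})
  (r : 'I_(1 + p)) (g : 'I_p -> 'I_m).
Hypothesis T_def : T = [set g j | j in 'I_p]%SET.
Hypothesis g_ordered : forall a b : 'I_p, tprec src dst T (g a) (g b) -> (a < b)%N.

Lemma tadj_tree_edge j : tadj src dst T (src (g j)) (dst (g j)).
Proof. by apply/existsP; exists (g j); rewrite T_def imset_f ?eqxx. Qed.

Lemma tree_parent_edge_lt j l : src (g j) = dst (g l) -> (l < j)%N.
Proof.
move=> src_j; apply: g_ordered; apply/existsP; exists (dst (g j)).
by rewrite connect0 andbT -src_j tadj_tree_edge.
Qed.

Hypothesis no_loops : no_self_loops src dst.
Hypothesis tree : out_spanning_tree src dst T r.

Lemma tree_edge_dst_neq_root j : dst (g j) != r.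
Proof.
apply/eqP => dst_r; case: tree => _ /(_ (src (g j))) /connectP[[|v q] /=].
  by move=> _ src_r; move: (no_loops (g j)); rewrite src_r dst_r eqxx.
move=> /andP[rv vq] src_last; suff : (j < j)%N by rewrite ltnn.
apply: g_ordered; apply/existsP; exists v; rewrite dst_r rv /=.
apply: (connect_trans (y := src (g j))); first by apply/connectP; exists q.
by rewrite -dst_r connect1 ?tadj_tree_edge.
Qed.

Hypothesis g_inj : injective g.

Lemma tree_edge_dst_inj a b : dst (g a) = dst (g b) -> a = b.
Proof.
move=> dst_ab; case: tree => _ _ /(_ _ (tree_edge_dst_neq_root a)) /eqP/cards1P[e].
have inT j : g j \in T by rewrite T_def imset_f.
move=> /setP e_uniq; apply: g_inj.
have := e_uniq (g a); have := e_uniq (g b); rewrite !inE !inT dst_ab eqxx /=.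
by move=> /esym/eqP -> /esym/eqP ->.
Qed.

End OrderedTree.

Lemma beta_ofE (R : realType) (N m : nat) (src dst : 'I_m -> 'I_N)
    (theta : R -> 'cV[R]_N) t e :
  beta_of src dst theta t e 0 = theta t (src e) 0 - theta t (dst e) 0.
Proof.
rewrite /beta_of /Bmx mxE; under eq_bigr => i _ do rewrite !mxE mulrBl.
have big_delta (v : 'I_N) : \sum_i (v == i)%:R * theta t i 0 = theta t v 0.
  rewrite (bigD1 v) //= eqxx mul1r big1 ?addr0 // => i /negbTE.
  by rewrite eq_sym => ->; rewrite mul0r.
by rewrite sumrB !big_delta.
Qed.

Section ClosedLoop.
Variables (R : realType) (p m : nat) (src dst : 'I_m -> 'I_(1 + p)).
Variables (T : {set 'I_m}) (r : 'I_(1 + p)) (g : 'I_p -> 'I_m).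
Hypothesis T_def : T = [set g j | j in 'I_p]%SET.
Hypothesis g_ordered : forall a b : 'I_p, tprec src dst T (g a) (g b) -> (a < b)%N.
Hypothesis no_loops : no_self_loops src dst.
Hypothesis tree : out_spanning_tree src dst T r.
Hypothesis g_inj : injective g.

Variables (k k2 w : R) (tau : nat -> R) (theta : R -> 'cV[R]_(1 + p)).
Variables (omega : 'cV[R]_(1 + p)) (S : seq R).
Let beta := beta_of src dst theta.
Let y := y_of src dst theta.
Hypothesis k2_gt0 : 0 < k2.
Hypothesis tau0_gt0 : 0 < tau 0%N.
Hypothesis tau_incr : forall j, (j < p)%N -> tau j < tau j.+1.
Hypothesis settling : forall j : 'I_p,
  `|beta (tau j) (g j) 0| / k2 < tau j.+1 - tau j.
Hypothesis theta_cont : forall i,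
  {within [set x : R | 0 <= x <= tau p], continuous (fun t => theta t i 0)}.
Hypothesis theta_deriv : forall t, 0 < t < tau p -> t \notin S -> forall i,
  is_derive t 1 (fun s => theta s i 0) (omega i 0 + ctrl dst g r k k2 tau y beta i t).
Hypothesis consensus : forall i, omega i 0 + k * y (tau 0%N) i 0 = w.

Lemma tau_le u v : (u <= v <= p)%N -> tau u <= tau v.
Proof.
move=> /andP[uv vp].
apply: (@Order.NatMonotonyTheory.nondecn_inP _ _ [pred j | j <= p]%N) => //=.
- by move=> i j ip jp l /andP[_ lj]; rewrite inE (leq_trans (ltnW lj)).
- by move=> i _ ip; exact/ltW/tau_incr.
- exact: leq_trans uv vp.
Qed.

Lemma tau_interval_unique (j j' : 'I_p) t :
  tau j < t < tau j.+1 -> tau j' <= t < tau j'.+1 -> j' = j.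
Proof.
move=> /andP[jt tj] /andP[j't tj']; apply: val_inj => /=.
have [j'_lt|j_lt|//] := ltngtP j' j; exfalso.
- have : tau j'.+1 <= tau j by rewrite tau_le // j'_lt ltnW.
  lra.
- have : tau j.+1 <= tau j' by rewrite tau_le // j_lt ltnW.
  lra.
Qed.

Lemma ctrl_on_interval (j : 'I_p) t i : tau j < t < tau j.+1 ->
  ctrl dst g r k k2 tau y beta i t =
  k * y (tau 0%N) i 0 + (dst (g j) == i)%:R * (k2 * Num.sg (beta t (g j) 0)).
Proof.
move=> t_in; have /andP[jt tj] := t_in.
have tau0_le : tau 0%N <= t by apply: le_trans (ltW jt); rewrite tau_le //= ltnW.
rewrite /ctrl ltNge tau0_le /=.
case: pickP => [j' /eqP <- | no_j]; last by rewrite no_j mul0r addr0.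
have [->|neq] := eqVneq j' j.
  by rewrite (tree_edge_dst_neq_root T_def g_ordered no_loops tree) (ltW jt) tj eqxx mul1r.
have -> : (dst (g j) == dst (g j')) = false.
  apply/negbTE; apply: contra_neq neq => /esym.
  exact: (tree_edge_dst_inj T_def g_ordered no_loops tree g_inj).
rewrite mul0r addr0; case: ifP => // /andP[/andP[_ j't] tj'].
have j'_in : tau j' <= t < tau j'.+1 by rewrite j't.
by rewrite (tau_interval_unique t_in j'_in) eqxx in neq.
Qed.

Lemma beta_entryE e :
  (fun s => beta s e 0) = (fun s => theta s (src e) 0) - (fun s => theta s (dst e) 0).
Proof. by apply/funext => s; rewrite /beta beta_ofE. Qed.

Lemma beta_deriv (j : 'I_p) t e : tau j < t < tau j.+1 -> t \notin S ->
  is_derive t 1 (fun s => beta s e 0)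
    (((dst (g j) == src e)%:R - (dst (g j) == dst e)%:R) *
     (k2 * Num.sg (beta t (g j) 0))).
Proof.
move=> t_in tS; have /andP[jt tj] := t_in.
have t_pos : 0 < t < tau p.
  apply/andP; split; last by apply: lt_le_trans tj _; rewrite tau_le // ltn_ord leqnn.
  by apply: lt_le_trans tau0_gt0 _; apply: le_trans (ltW jt); rewrite tau_le //= ltnW.
have theta_deriv_j i : is_derive t 1 (fun s => theta s i 0)
    (w + (dst (g j) == i)%:R * (k2 * Num.sg (beta t (g j) 0))).
  apply: is_derive_eq (theta_deriv t_pos tS i) _.
  by rewrite (ctrl_on_interval _ t_in) addrA consensus.
have := is_deriveB (theta_deriv_j (src e)) (theta_deriv_j (dst e)).
rewrite -beta_entryE => /is_derive_eq; apply.
by rewrite mulrBl opprD addrACA subrr add0r.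
Qed.

Lemma beta_cont l e : (l < p)%N ->
  {within [set x | tau l <= x <= tau l.+1], continuous (fun s => beta s e 0)}.
Proof.
move=> lp; have sub : [set x | tau l <= x <= tau l.+1] `<=` [set x | 0 <= x <= tau p].
  move=> x /= /andP[lx xl]; apply/andP; split.
    by apply: le_trans (ltW tau0_gt0) (le_trans _ lx); rewrite tau_le //= ltnW.
  by apply: le_trans xl _; rewrite tau_le // lp leqnn.
have theta_cont_l i : {within [set x | tau l <= x <= tau l.+1],
    continuous (fun s => theta s i 0)} := continuous_subspaceW sub (@theta_cont i).
by rewrite beta_entryE => x; apply: continuousB; exact: theta_cont_l.
Qed.

Lemma beta_tree_edge_settles (j : 'I_p) : beta (tau j.+1) (g j) 0 = 0.
Proof.
apply: (sg_feedback_eq0 (S := S) k2_gt0 (tau_incr (ltn_ord j))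
  (@beta_cont j (g j) (ltn_ord j))).
  move=> t t_in tS; apply: is_derive_eq (beta_deriv (g j) t_in tS) _.
  by rewrite eq_sym (negbTE (no_loops _)) eqxx sub0r mulN1r.
by rewrite mulrC -ltr_pdivrMr //; exact: settling.
Qed.

Lemma beta_tree_edge_stays0 (j : 'I_p) l : (j < l <= p)%N -> beta (tau l) (g j) 0 = 0.
Proof.
elim: l => // l IH /andP[]; rewrite ltnS leq_eqVlt => /predU1P[<- _|j_lt lp].
  exact: beta_tree_edge_settles.
rewrite -IH; last by rewrite j_lt ltnW.
apply: (piecewise_derive0_eq (S := S) (ltW (tau_incr lp)) (@beta_cont l (g j) lp)).
move=> t t_in tS.
apply: is_derive_eq (@beta_deriv (Ordinal lp) t _ t_in tS) _ => /=.
have -> : (dst (g (Ordinal lp)) == src (g j)) = false.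
  apply/eqP => /esym /(tree_parent_edge_lt T_def g_ordered) /=.
  by rewrite ltnNge ltnW.
have -> : (dst (g (Ordinal lp)) == dst (g j)) = false.
  apply/eqP => /(tree_edge_dst_inj T_def g_ordered no_loops tree g_inj) /(congr1 val) /= l_eq.
  by rewrite l_eq ltnn in j_lt.
by rewrite subrr mul0r.
Qed.

End ClosedLoop.

Theorem lemma4 (R : realType) (p m : nat) (src dst : 'I_m -> 'I_(1 + p))
    (z : 'cV[R]_(1 + p)) (Qd : 'M[R]_(1 + p)) (omega : 'cV[R]_(1 + p))
    (Tset : {set 'I_m}) (r : 'I_(1 + p)) (g : 'I_p -> 'I_m)
    (k k2 : R) (tau : nat -> R) (theta : R -> 'cV[R]_(1 + p)) :
  no_self_loops src dst ->
  strongly_connected src dst ->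
  (forall i, 0 < z i 0) ->
  z^T *m Qmx R src dst = 0 ->
  (const_mx 1)^T *m z = 1 ->
  is_Qdagger (Qmx R src dst) Qd z ->
  out_spanning_tree src dst Tset r ->
  injective g ->
  Tset = [set g j | j in 'I_p]%SET ->
  (forall a b : 'I_p, tprec src dst Tset (g a) (g b) -> (a < b)%N) ->
  0 < k -> 0 < k2 ->
  0 < tau 0%N ->
  (forall j, (j < p)%N -> tau j < tau j.+1) ->
  (forall j : 'I_p,
     `|beta_of src dst theta (tau j) (g j) 0| / k2 < tau j.+1 - tau j) ->
  (* theta solves the closed-loop dynamics on [0, tau p] *)
  (forall i, {within [set x : R | 0 <= x <= tau p], continuous (fun t => theta t i 0)}) ->
  (exists S : seq R, forall t, 0 < t < tau p -> t \notin S -> forall i,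
     is_derive t 1 (fun s => theta s i 0)
       (omega i 0 + ctrl dst g r k k2 tau (y_of src dst theta)
                      (beta_of src dst theta) i t)) ->
  beta_of src dst theta (tau 0%N) = - k^-1 *: ((Bmx R src dst)^T *m Qd *m omega) ->
  omega + k *: y_of src dst theta (tau 0%N) = (const_mx 1 *m z^T) *m omega ->
  forall a, a \in Tset -> beta_of src dst theta (tau p) a 0 = 0.
Proof.
(* Only [omega + k y(tau 0) = W omega] is needed about the state at [tau 0]. *)
move=> no_loops _ _ _ _ _ tree g_inj T_def g_ordered _ k2_gt0 tau0_gt0 tau_incr
  settling theta_cont [S theta_deriv] _ consensus a.
have consensus_i i :
    omega i 0 + k * y_of src dst theta (tau 0%N) i 0 = (z^T *m omega) 0 0.
  have := congr1 (fun M : 'cV[R]_(1 + p) => M i 0) consensus.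
  by rewrite -mulmxA !mxE big_ord1 !mxE mul1r.
rewrite T_def => /imsetP[j _ ->].
apply: (beta_tree_edge_stays0 T_def g_ordered no_loops tree g_inj k2_gt0 tau0_gt0
  tau_incr settling theta_cont theta_deriv consensus_i).
by rewrite ltn_ord leqnn.
Qed.
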